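(* Let $(\mathbb{C},\mathcal{N})$ be a regular multi-pointed category with $\mathcal{N}$-kernels, in which every kernel star has a coequaliser and every regular diamond of the form (1) is left saturated. Then the following are equivalent: (i) $(\mathbb{C},\mathcal{N})$ is a star-regular category; (ii) for every morphism $m\colon U\to V$, $m$ is a monomorphism if and only if its kernel star $M^*$ equals $\Delta_U^*$.
   Context: Throughout, $\mathbb{C}$ is a finitely complete regular category. An ideal of morphisms is a class $\mathcal{N}$ of morphisms of $\mathbb{C}$ such that for composable $f,g$, if $f\in\mathcal{N}$ or $g\in\mathcal{N}$ then $gf\in\mathcal{N}$; $(\mathbb{C},\mathcal{N})$ is then called a multi-pointed category. A star on $X$ is a pair of parallel morphisms $\tau=(\tau_1,\tau_2)\colon T\rightrightarrows X$ with $\tau_1\in\mathcal{N}$; it is a monic star if $\tau_1,\tau_2$ are jointly monic. An $\mathcal{N}$-kernel of $f\colon X\to Y$ is a morphism $k\colon \mathcal{N}\ker(f)\to X$ with $fk\in\mathcal{N}$ such that every $g\colon L\to X$ with $fg\in\mathcal{N}$ factors uniquely through $k$. For a relation $\rho=(\rho_1,\rho_2)\colon R\rightrightarrows X$, $\rho^*\colon R^*\rightrightarrows X$ is the monic star $(\rho_1k,\rho_2k)$, where $k\colon R^*\to R$ is the $\mathcal{N}$-kernel of $\rho_1$; $\Delta_X^*:=(1_X,1_X)^*$. The kernel star of $f\colon X\to Y$, denoted by the corresponding capital letter $F^*\rightrightarrows X$, is $Eq(f)^*$, where $Eq(f)$ is the kernel pair of $f$. Every star factors uniquely up to isomorphism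 as a regular epimorphism followed by a monic star; for $f\colon X\to Y$ and a star $\lambda\colon U\rightrightarrows X$, the image $f(\lambda)\colon f(U)\rightrightarrows Y$ is the monic star part of the factorisation of $(f\lambda_1,f\lambda_2)$. A star-regular category is a regular multi-pointed category with $\mathcal{N}$-kernels in which every regular epimorphism is a coequaliser of some star. A diamond is a commutative square $ge=hf$ with $e\colon X\to Z$, $f\colon X\to Y$, $g\colon Z\to W$, $h\colon Y\to W$; it is regular if all four arrows are regular epimorphisms, and left saturated if $e(F^* )=G^*$. A regular diamond of the form (1) is one with $h=1_Y$ (so $ge=f$). *)

Set Implicit Arguments.
Unset Strict Implicit.

Record Cat := {
  Ob : Type;
  Hom : Ob -> Ob -> Type;
  idm : forall X, Hom X X;
  comp : forall X Y Z, Hom Y Z -> Hom X Y -> Hom X Z;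
  comp_id_l : forall X Y (f : Hom X Y), comp (idm Y) f = f;
  comp_id_r : forall X Y (f : Hom X Y), comp f (idm X) = f;
  comp_assoc : forall X Y Z W (f : Hom X Y) (g : Hom Y Z) (h : Hom Z W),
      comp h (comp g f) = comp (comp h g) f
}.

Arguments Hom : clear implicits.
Arguments idm {c} X.
Arguments comp {c X Y Z} _ _.

Section CatDefs.
Variable C : Cat.
Notation Ob := (Ob C).
Notation Hom := (Hom C).

Definition mono {X Y : Ob} (f : Hom X Y) : Prop :=
  forall Z (g h : Hom Z X), comp f g = comp f h -> g = h.

Definition jointly_monic {T X Y : Ob} (a : Hom T X) (b : Hom T Y) : Prop :=
  forall Z (g h : Hom Z T), comp a g = comp a h -> comp b g = comp b h -> g = h.

Definition is_terminal (T : Ob) : Prop :=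
  forall X : Ob, exists! f : Hom X T, True.

Definition is_pullback {X Y Z P : Ob} (f : Hom X Z) (g : Hom Y Z)
  (p1 : Hom P X) (p2 : Hom P Y) : Prop :=
  comp f p1 = comp g p2 /\
  forall Q (q1 : Hom Q X) (q2 : Hom Q Y), comp f q1 = comp g q2 ->
    exists! u : Hom Q P, comp p1 u = q1 /\ comp p2 u = q2.

Definition finitely_complete : Prop :=
  (exists T : Ob, is_terminal T) /\
  (forall X Y Z (f : Hom X Z) (g : Hom Y Z),
      exists P (p1 : Hom P X) (p2 : Hom P Y), is_pullback f g p1 p2).

Definition is_coequaliser {T X Q : Ob} (a b : Hom T X) (q : Hom X Q) : Prop :=
  comp q a = comp q b /\
  forall W (h : Hom X W), comp h a = comp h b -> exists! u : Hom Q W, comp u q = h.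

Definition regular_epi {X Q : Ob} (q : Hom X Q) : Prop :=
  exists T (a b : Hom T X), is_coequaliser a b q.

Definition is_kernel_pair {X Y P : Ob} (f : Hom X Y) (p1 p2 : Hom P X) : Prop :=
  is_pullback f f p1 p2.

Definition regular_category : Prop :=
  finitely_complete /\
  (forall X Y P (f : Hom X Y) (p1 p2 : Hom P X), is_kernel_pair f p1 p2 ->
      exists Q (q : Hom X Q), is_coequaliser p1 p2 q) /\
  (forall X Y Z P (f : Hom X Z) (g : Hom Y Z) (p1 : Hom P X) (p2 : Hom P Y),
      regular_epi f -> is_pullback f g p1 p2 -> regular_epi p2).

Variable N : forall X Y : Ob, Hom X Y -> Prop.

Definition ideal : Prop :=
  forall X Y Z (f : Hom X Y) (g : Hom Y Z), (N f \/ N g) -> N (comp g f).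

Definition is_N_kernel {X Y K : Ob} (f : Hom X Y) (k : Hom K X) : Prop :=
  N (comp f k) /\
  forall L (g : Hom L X), N (comp f g) -> exists! u : Hom L K, comp k u = g.

Definition has_N_kernels : Prop :=
  forall X Y (f : Hom X Y), exists K (k : Hom K X), is_N_kernel f k.

(* (s1,s2) : S ⇉ X represents rho^* for the relation (r1,r2) : R ⇉ X *)
Definition star_of {R S X : Ob} (r1 r2 : Hom R X) (s1 s2 : Hom S X) : Prop :=
  exists k : Hom S R, is_N_kernel r1 k /\ s1 = comp r1 k /\ s2 = comp r2 k.

Definition kernel_star {X Y S : Ob} (f : Hom X Y) (s1 s2 : Hom S X) : Prop :=
  exists P (p1 p2 : Hom P X), is_kernel_pair f p1 p2 /\ star_of p1 p2 s1 s2.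

Definition diag_star {U S : Ob} (s1 s2 : Hom S U) : Prop :=
  star_of (idm U) (idm U) s1 s2.

(* equality of (monic) stars / relations, i.e. up to a compatible isomorphism *)
Definition same_star {S T X : Ob} (s1 s2 : Hom S X) (t1 t2 : Hom T X) : Prop :=
  exists (i : Hom S T) (j : Hom T S),
    comp j i = idm S /\ comp i j = idm T /\ comp t1 i = s1 /\ comp t2 i = s2.

(* (m1,m2) : W ⇉ Y represents the image e(lambda) of (l1,l2) : U ⇉ X under e:
   the jointly monic part of the (regular epi, jointly monic) factorisation of
   (e l1, e l2). *)
Definition is_image {X Y U W : Ob} (e : Hom X Y) (l1 l2 : Hom U X)
  (m1 m2 : Hom W Y) : Prop :=
  exists q : Hom U W, regular_epi q /\ jointly_monic m1 m2 /\
    comp m1 q = comp e l1 /\ comp m2 q = comp e l2.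

(* the diamond g ∘ e = 1_Y ∘ f is left saturated: e(F^* ) = G^* *)
Definition left_saturated1 {X Y Z : Ob} (e : Hom X Z) (f : Hom X Y) (g : Hom Z Y)
  : Prop :=
  forall K (k1 k2 : Hom K X), kernel_star f k1 k2 ->
  forall W (m1 m2 : Hom W Z), is_image e k1 k2 m1 m2 ->
  forall G (g1 g2 : Hom G Z), kernel_star g g1 g2 ->
  same_star m1 m2 g1 g2.

Definition regular_diamonds1_left_saturated : Prop :=
  forall X Y Z (e : Hom X Z) (f : Hom X Y) (g : Hom Z Y),
    regular_epi e -> regular_epi f -> regular_epi g -> comp g e = f ->
    left_saturated1 e f g.

Definition kernel_stars_have_coequalisers : Prop :=
  forall X Y S (f : Hom X Y) (s1 s2 : Hom S X), kernel_star f s1 s2 ->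
    exists Q (q : Hom X Q), is_coequaliser s1 s2 q.

Definition star_regular : Prop :=
  regular_category /\ ideal /\ has_N_kernels /\
  forall X Q (q : Hom X Q), regular_epi q ->
    exists T (t1 t2 : Hom T X), N t1 /\ is_coequaliser t1 t2 q.

Definition mono_iff_trivial_kernel_star : Prop :=
  forall U V (m : Hom U V),
  forall K (k1 k2 : Hom K U), kernel_star m k1 k2 ->
  forall D (d1 d2 : Hom D U), diag_star d1 d2 ->
  (mono m <-> same_star k1 k2 d1 d2).

End CatDefs.

(* (i) => (ii): a monomorphism has a kernel pair with equal legs, hence kernel star
   Delta^*; conversely, if M^* = Delta^*, then any star (t1, t2) coequalised by m
   already has t1 = t2, so the regular epi part of m, being the coequaliser of
   such a star, is invertible and m is monic.
   (ii) => (i): given a regular epi q, let e be the coequaliser of Q^* and write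
   q = g e. Since e identifies the legs of Q^*, the image of Q^* under e has equal legs;
   by left saturation so does G^*, i.e. G^* = Delta^*. By (ii) g is a monic regular
   epi, hence an isomorphism, and q is the coequaliser of the star Q^*. *)

Set Implicit Arguments.
Unset Strict Implicit.

Section Epis.
Variable C : Cat.

Definition epi {X Y : Ob C} (f : Hom C X Y) : Prop :=
  forall Z (u v : Hom C Y Z), comp u f = comp v f -> u = v.

Lemma coequaliser_epi (T X Q : Ob C) (a b : Hom C T X) (q : Hom C X Q) :
  is_coequaliser a b q -> epi q.
Proof.
  intros [Hq Hfac] W u v Huv.
  destruct (Hfac W (comp u q)) as [w [_ Hw]].
  { rewrite <- !comp_assoc, Hq. reflexivity. }
  transitivity w; [symmetry|]; apply Hw; auto.
Qed.

Lemma regular_epi_epi (X Q : Ob C) (q : Hom C X Q) : regular_epi q -> epi q.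
Proof. intros [T [a [b Hq]]]. exact (coequaliser_epi Hq). Qed.

Lemma epi_comp (X Y Z : Ob C) (f : Hom C X Y) (g : Hom C Y Z) :
  epi f -> epi g -> epi (comp g f).
Proof.
  intros Hf Hg W u v Huv. apply Hg, Hf. rewrite <- !comp_assoc. exact Huv.
Qed.

Lemma mono_of_retraction (X Y : Ob C) (q : Hom C X Y) (u : Hom C Y X) :
  comp u q = idm X -> mono q.
Proof.
  intros Hu Z g h Hgh.
  rewrite <- (comp_id_l g), <- (comp_id_l h), <- Hu, <- !comp_assoc, Hgh.
  reflexivity.
Qed.

Lemma coequaliser_diag_retraction (T X Q : Ob C) (t : Hom C T X) (q : Hom C X Q) :
  is_coequaliser t t q -> exists u : Hom C Q X, comp u q = idm X.
Proof.
  intros [_ Hfac]. destruct (Hfac X (idm X) eq_refl) as [u [Hu _]]. now exists u.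
Qed.

Lemma mono_regular_epi_retraction (X Y : Ob C) (g : Hom C X Y) :
  mono g -> regular_epi g -> exists s : Hom C Y X, comp s g = idm X.
Proof.
  intros Hg [T [a [b Hab]]].
  assert (Eab : a = b) by exact (Hg _ _ _ (proj1 Hab)).
  subst b. exact (coequaliser_diag_retraction Hab).
Qed.

Lemma regular_epi_of_comp (X Y Z : Ob C) (e : Hom C X Z) (g : Hom C Z Y) :
  epi e -> regular_epi (comp g e) -> regular_epi g.
Proof.
  intros He [T [a [b [Hab Hfac]]]].
  exists T, (comp e a), (comp e b). split.
  - rewrite !comp_assoc. exact Hab.
  - intros W h Hh. rewrite !comp_assoc in Hh.
    destruct (Hfac W (comp h e) Hh) as [u [Hu Huniq]]. exists u. split.
    + apply He. rewrite <- comp_assoc. exact Hu.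
    + intros u' Hu'. apply Huniq. rewrite <- Hu', comp_assoc. reflexivity.
Qed.

Lemma coequaliser_comp_retraction (T X Z Y : Ob C) (a b : Hom C T X)
  (e : Hom C X Z) (g : Hom C Z Y) (s : Hom C Y Z) :
  is_coequaliser a b e -> comp s g = idm Z -> epi (comp g e) ->
  is_coequaliser a b (comp g e).
Proof.
  intros [Hab Hfac] Hs Hge. split.
  - rewrite <- !comp_assoc, Hab. reflexivity.
  - intros W h Hh. destruct (Hfac W h Hh) as [v [Hv _]].
    assert (Hvs : comp (comp v s) (comp g e) = h).
    { rewrite <- comp_assoc, (comp_assoc e g s), Hs, comp_id_l. exact Hv. }
    exists (comp v s). split; [exact Hvs|].
    intros u Hu. apply Hge. rewrite Hu, Hvs. reflexivity.
Qed.

Lemma mono_of_kernel_pair_coequalised (X Y P Q : Ob C) (m : Hom C X Y)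
  (p1 p2 : Hom C P X) (q : Hom C X Q) :
  is_kernel_pair m p1 p2 -> comp q p1 = comp q p2 -> mono q -> mono m.
Proof.
  intros [_ Hkp] Hq Hmq Z g h Hgh.
  destruct (Hkp _ _ _ Hgh) as [z [[Hz1 Hz2] _]].
  apply Hmq. rewrite <- Hz1, <- Hz2, !comp_assoc, Hq. reflexivity.
Qed.

End Epis.

Section Regular.
Variable C : Cat.
Hypothesis Hreg : regular_category C.

Lemma regular_epi_lift (K W R : Ob C) (c : Hom C K W) (x : Hom C R W) :
  regular_epi c ->
  exists S (phi : Hom C S R) (z : Hom C S K), regular_epi phi /\ comp c z = comp x phi.
Proof.
  intros Hc. destruct Hreg as [[_ Hpb] [_ Hstable]].
  destruct (Hpb _ _ _ c x) as [S [z [phi Hpull]]].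
  exists S, phi, z. split; [exact (Hstable _ _ _ _ _ _ _ _ Hc Hpull) | exact (proj1 Hpull)].
Qed.

Lemma regular_epi_lift2 (K W R : Ob C) (c : Hom C K W) (x y : Hom C R W) :
  regular_epi c ->
  exists S (phi : Hom C S R) (z1 z2 : Hom C S K),
    epi phi /\ comp c z1 = comp x phi /\ comp c z2 = comp y phi.
Proof.
  intros Hc.
  destruct (regular_epi_lift x Hc) as [S1 [pi [z1 [Hpi Hz1]]]].
  destruct (regular_epi_lift (comp y pi) Hc) as [S [rho [z2 [Hrho Hz2]]]].
  exists S, (comp pi rho), (comp z1 rho), z2. split; [|split].
  - exact (epi_comp (regular_epi_epi Hrho) (regular_epi_epi Hpi)).
  - rewrite !comp_assoc, Hz1. reflexivity.
  - rewrite Hz2, comp_assoc. reflexivity.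
Qed.

(* The regular epi part is the coequaliser of the kernel pair of h. *)
Lemma regular_image_factorisation (K Z : Ob C) (h : Hom C K Z) :
  exists W (c : Hom C K W) (m : Hom C W Z), regular_epi c /\ mono m /\ comp m c = h.
Proof.
  pose proof Hreg as [[_ Hpb] [Hcoeq _]].
  destruct (Hpb _ _ _ h h) as [P [a [b Hab]]].
  destruct (Hcoeq _ _ _ h a b Hab) as [W [c Hc]].
  assert (Hce : regular_epi c) by (exists P, a, b; exact Hc).
  destruct (proj2 Hc _ h (proj1 Hab)) as [m [Hm _]].
  exists W, c, m. split; [exact Hce|]. split; [|exact Hm].
  intros R x y Hxy.
  destruct (regular_epi_lift2 x y Hce) as [S [phi [z1 [z2 [Hphi [Hz1 Hz2]]]]]].
  assert (Hhz : comp h z1 = comp h z2).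
  { rewrite <- Hm, <- !comp_assoc, Hz1, Hz2, !comp_assoc, Hxy. reflexivity. }
  destruct (proj2 Hab _ _ _ Hhz) as [w [[Hw1 Hw2] _]].
  apply Hphi. rewrite <- Hz1, <- Hz2, <- Hw1, <- Hw2, !comp_assoc, (proj1 Hc).
  reflexivity.
Qed.

Lemma image_of_coequalised_pair (X Z U : Ob C) (e : Hom C X Z) (l1 l2 : Hom C U X) :
  comp e l1 = comp e l2 -> exists W (m : Hom C W Z), is_image e l1 l2 m m.
Proof.
  intros He.
  destruct (regular_image_factorisation (comp e l1)) as [W [c [m [Hc [Hm Hmc]]]]].
  exists W, m, c. split; [exact Hc|]. split; [|split; [exact Hmc | rewrite Hmc; exact He]].
  intros Z' g h Hgh _. exact (Hm _ _ _ Hgh).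
Qed.

End Regular.

Section Stars.
Variable C : Cat.
Variable N : forall X Y : Ob C, Hom C X Y -> Prop.

Lemma N_kernel_endo_id (X Y K : Ob C) (f : Hom C X Y) (k : Hom C K X) (u : Hom C K K) :
  is_N_kernel N f k -> comp k u = k -> u = idm K.
Proof.
  intros [Hfk Hfac] Hu. destruct (Hfac _ k Hfk) as [z [_ Hz]].
  transitivity z; [symmetry|]; apply Hz; [exact Hu | apply comp_id_r].
Qed.

Lemma kernel_star_coequalised (X Y S : Ob C) (f : Hom C X Y) (s1 s2 : Hom C S X) :
  kernel_star N f s1 s2 -> comp f s1 = comp f s2.
Proof.
  intros [P [p1 [p2 [[Hp _] [k [_ [-> ->]]]]]]].
  rewrite !comp_assoc, Hp. reflexivity.
Qed.

Lemma kernel_star_N (X Y S : Ob C) (f : Hom C X Y) (s1 s2 : Hom C S X) :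
  kernel_star N f s1 s2 -> N s1.
Proof. intros [P [p1 [p2 [_ [k [[Hk _] [-> _]]]]]]]. exact Hk. Qed.

Lemma kernel_star_exists (X Y : Ob C) (f : Hom C X Y) :
  finitely_complete C -> has_N_kernels N ->
  exists S (s1 s2 : Hom C S X), kernel_star N f s1 s2.
Proof.
  intros [_ Hpb] Hker. destruct (Hpb _ _ _ f f) as [P [p1 [p2 Hp]]].
  destruct (Hker _ _ p1) as [K [k Hk]].
  exists K, (comp p1 k), (comp p2 k), P, p1, p2. split; [exact Hp|]. now exists k.
Qed.

Lemma diag_star_exists (U : Ob C) :
  has_N_kernels N -> exists D (d1 d2 : Hom C D U), diag_star N d1 d2.
Proof.
  intros Hker. destruct (Hker _ _ (idm U)) as [D [d Hd]].
  exists D, (comp (idm U) d), (comp (idm U) d). now exists d.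
Qed.

Lemma diag_star_eq (U D : Ob C) (d1 d2 : Hom C D U) : diag_star N d1 d2 -> d1 = d2.
Proof. intros [d [_ [-> ->]]]. reflexivity. Qed.

Lemma same_star_sym (S T X : Ob C) (s1 s2 : Hom C S X) (t1 t2 : Hom C T X) :
  same_star s1 s2 t1 t2 -> same_star t1 t2 s1 s2.
Proof.
  intros [i [j [Hji [Hij [Hi1 Hi2]]]]]. exists j, i.
  split; [exact Hij|]. split; [exact Hji|].
  split; [rewrite <- Hi1 | rewrite <- Hi2];
    rewrite <- comp_assoc, Hij, comp_id_r; reflexivity.
Qed.

Lemma same_star_eq (S T X : Ob C) (s1 s2 : Hom C S X) (t : Hom C T X) :
  same_star s1 s2 t t -> s1 = s2.
Proof. intros [i [_ [_ [_ [<- <-]]]]]. reflexivity. Qed.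

Lemma mono_kernel_star_eq (X Y S : Ob C) (m : Hom C X Y) (k1 k2 : Hom C S X) :
  mono m -> kernel_star N m k1 k2 -> k1 = k2.
Proof.
  intros Hm [P [p1 [p2 [[Hp _] [k [_ [-> ->]]]]]]].
  rewrite (Hm _ _ _ Hp). reflexivity.
Qed.

(* Both stars are N-kernels of maps through which the diagonal of X factors. *)
Lemma kernel_star_eq_same_diag (X Y S D : Ob C) (m : Hom C X Y) (s : Hom C S X)
  (d1 d2 : Hom C D X) :
  kernel_star N m s s -> diag_star N d1 d2 -> same_star s s d1 d2.
Proof.
  intros [P [p1 [p2 [Hp [k [Hk [Hs1 Hs2]]]]]]] [d [Hd [-> ->]]].
  rewrite comp_id_l.
  assert (Nd : N d) by (pose proof (proj1 Hd) as H; rewrite comp_id_l in H; exact H).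
  assert (Ns : N (comp (idm X) s)) by (rewrite comp_id_l, Hs1; exact (proj1 Hk)).
  destruct (proj2 Hd _ _ Ns) as [i [Hi _]].
  destruct (proj2 Hp _ d d eq_refl) as [w [[Hw1 Hw2] _]].
  assert (Nw : N (comp p1 w)) by (rewrite Hw1; exact Nd).
  destruct (proj2 Hk _ _ Nw) as [j [Hj _]].
  exists i, j. split; [|split; [|split; exact Hi]].
  - apply (N_kernel_endo_id Hk).
    assert (Hmk : comp m (comp p1 k) = comp m (comp p2 k))
      by (rewrite !comp_assoc, (proj1 Hp); reflexivity).
    destruct (proj2 Hp _ _ _ Hmk) as [z [_ Hz]].
    transitivity z; [symmetry|]; apply Hz; split; try reflexivity;
      rewrite (comp_assoc i j k), Hj, comp_assoc, ?Hw1, ?Hw2, Hi; auto.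
  - apply (N_kernel_endo_id Hd).
    rewrite comp_assoc, Hi, Hs1, <- comp_assoc, Hj, Hw1. reflexivity.
Qed.

Lemma trivial_kernel_star_N_eq (X Y S T : Ob C) (m : Hom C X Y) (s : Hom C S X)
  (t1 t2 : Hom C T X) :
  kernel_star N m s s -> N t1 -> comp m t1 = comp m t2 -> t1 = t2.
Proof.
  intros [P [p1 [p2 [Hp [k [Hk [Hs1 Hs2]]]]]]] Nt Ht.
  destruct (proj2 Hp _ _ _ Ht) as [w [[Hw1 Hw2] _]].
  assert (Nw : N (comp p1 w)) by (rewrite Hw1; exact Nt).
  destruct (proj2 Hk _ _ Nw) as [v [Hv _]].
  rewrite <- Hw1, <- Hw2, <- Hv, !comp_assoc, <- Hs1, <- Hs2. reflexivity.
Qed.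

Definition regular_epis_N_coequalisers : Prop :=
  forall X Q (q : Hom C X Q), regular_epi q ->
    exists T (t1 t2 : Hom C T X), N t1 /\ is_coequaliser t1 t2 q.

Lemma mono_of_trivial_kernel_star (X Y S : Ob C) (m : Hom C X Y) (s : Hom C S X) :
  regular_category C -> regular_epis_N_coequalisers ->
  kernel_star N m s s -> mono m.
Proof.
  intros [_ [Hcoeq _]] Hsr Hs. pose proof Hs as [P [p1 [p2 [Hp _]]]].
  destruct (Hcoeq _ _ _ m p1 p2 Hp) as [Q [q Hq]].
  destruct (Hsr _ _ q (ex_intro _ P (ex_intro _ p1 (ex_intro _ p2 Hq))))
    as [T [t1 [t2 [Nt Ht]]]].
  destruct (proj2 Hq _ m (proj1 Hp)) as [n [Hn _]].
  assert (Et : t1 = t2).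
  { apply (trivial_kernel_star_N_eq Hs Nt).
    rewrite <- Hn, <- !comp_assoc, (proj1 Ht). reflexivity. }
  subst t2. destruct (coequaliser_diag_retraction Ht) as [u Hu].
  exact (mono_of_kernel_pair_coequalised Hp (proj1 Hq) (mono_of_retraction Hu)).
Qed.

Lemma regular_epi_coequalises_kernel_star (X Y S : Ob C) (q : Hom C X Y)
  (s1 s2 : Hom C S X) :
  regular_category C -> has_N_kernels N -> kernel_stars_have_coequalisers N ->
  regular_diamonds1_left_saturated N -> mono_iff_trivial_kernel_star N ->
  regular_epi q -> kernel_star N q s1 s2 -> is_coequaliser s1 s2 q.
Proof.
  intros Hreg Hker Hcoeq Hls Hii Hq Hs.
  destruct (Hcoeq _ _ _ q _ _ Hs) as [Z [e He]].
  destruct (proj2 He _ q (kernel_star_coequalised Hs)) as [g [Hge _]].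
  assert (Hee : regular_epi e) by (exists S, s1, s2; exact He).
  assert (Hg : regular_epi g)
    by (rewrite <- Hge in Hq; exact (regular_epi_of_comp (regular_epi_epi Hee) Hq)).
  destruct (image_of_coequalised_pair Hreg (proj1 He)) as [W [m Him]].
  destruct (kernel_star_exists g (proj1 Hreg) Hker) as [G [g1 [g2 HG]]].
  assert (Eg : g1 = g2)
    by exact (same_star_eq (same_star_sym (Hls _ _ _ e q g Hee Hq Hg Hge _ _ _ Hs
                                             _ _ _ Him _ _ _ HG))).
  subst g2.
  destruct (diag_star_exists Z Hker) as [D [d1 [d2 Hd]]].
  assert (Hmono : mono g)
    by exact (proj2 (Hii _ _ g _ _ _ HG _ _ _ Hd) (kernel_star_eq_same_diag HG Hd)).
  destruct (mono_regular_epi_retraction Hmono Hg) as [r Hr].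
  rewrite <- Hge in *.
  exact (coequaliser_comp_retraction He Hr (regular_epi_epi Hq)).
Qed.

End Stars.

Theorem lemma2p4 (C : Cat) (N : forall X Y : Ob C, Hom C X Y -> Prop)
  (Hreg : regular_category C) (Hid : ideal N) (Hker : has_N_kernels N)
  (Hcoeq : kernel_stars_have_coequalisers N)
  (Hls : regular_diamonds1_left_saturated N) :
  star_regular N <-> mono_iff_trivial_kernel_star N.
Proof.
  split.
  - intros [_ [_ [_ Hsr]]] U V m K k1 k2 Hk D d1 d2 Hd. split.
    + intros Hm. pose proof (mono_kernel_star_eq Hm Hk) as <-.
      exact (kernel_star_eq_same_diag Hk Hd).
    + intros Hsame. rewrite (diag_star_eq Hd) in Hsame.
      rewrite (same_star_eq Hsame) in Hk.
      exact (mono_of_trivial_kernel_star Hreg Hsr Hk).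
  - intros Hii. split; [exact Hreg|]. split; [exact Hid|]. split; [exact Hker|].
    intros X Y q Hq.
    destruct (kernel_star_exists q (proj1 Hreg) Hker) as [S [s1 [s2 Hs]]].
    exists S, s1, s2. split; [exact (kernel_star_N Hs)|].
    exact (regular_epi_coequalises_kernel_star Hreg Hker Hcoeq Hls Hii Hq Hs).
Qed.
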